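(* Let $\alpha\ge1$ and $p$ be integers with $1\le p\le\alpha^2$, and let $c$ be real with $1\le c\le p\gamma/\alpha$. Then, as $r\to\infty$, $$n_{c,r}^{-1}|S_p\cap[n_{c,r}]|=\tfrac12 c^{-1}\left(1-(\alpha\gamma)^{-1}p\right)^2+O(\gamma^{-r}).$$ In particular, for $p=\alpha^2$ and $1\le c\le\alpha\gamma$, $$n_{c,r}^{-1}|S_p\cap[n_{c,r}]|=\tfrac12c^{-1}\gamma^{-4}+O(\gamma^{-r}).$$
   Context: Here $\beta=1$. For a positive integer $\alpha$ and positive integers $a_1,a_2$, the $(\alpha,1)$-walk $w_k(a_1,a_2)$ is given by $w_1=a_1$, $w_2=a_2$, $w_{k+2}=\alpha w_{k+1}+w_k$ ($k\ge1$). For a positive integer $n$, $s(n;a_1,a_2)$ is the (largest) index $s$ with $w_s(a_1,a_2)=n$ ($-\infty$ if none), and $s(n)=\max_{a_1,a_2\ge1}s(n;a_1,a_2)$. A pair of positive integers $(a_1,a_2)$ is $n$-good if $s(n;a_1,a_2)=s(n)$; $p(n)$ is the number of $n$-good pairs (possibly infinite). $S_p=\{m\ge1:p(m)>p\}$. Let $\gamma=\frac12(\alpha+\sqrt{\alpha^2+4})$, $\lambda=\frac12(\alpha-\sqrt{\alpha^2+4})$, and $n_{c,r}=\left\lfloor\frac{c}{(\gamma-\lambda)^2}\gamma^{2r+1}\right\rfloor$. $[N]=\{1,\dots,N\}$. *)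

From Stdlib Require Import Reals Lra Lia List ClassicalEpsilon.
Import ListNotations.
Open Scope R_scope.

(* Pair (w_{k+1}, w_{k+2}) of the (alpha,1)-walk started at (a1,a2). *)
Fixpoint wpair (alpha a1 a2 : nat) (k : nat) : nat * nat :=
  match k with
  | O => (a1, a2)
  | S k' => let (x, y) := wpair alpha a1 a2 k' in (y, (alpha * y + x)%nat)
  end.

Definition walk (alpha a1 a2 k : nat) : nat := fst (wpair alpha a1 a2 (k - 1)).

(* (a1,a2) is n-good : s(n;a1,a2) = s(n), i.e. the largest index s with
   w_s(a1,a2) = n exists and is >= every index j with w_j(b1,b2) = n for
   any positive b1, b2. *)
Definition good (alpha n a1 a2 : nat) : Prop :=
  (1 <= a1)%nat /\ (1 <= a2)%nat /\
  exists k, (1 <= k)%nat /\ walk alpha a1 a2 k = n /\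
    forall b1 b2 j, (1 <= b1)%nat -> (1 <= b2)%nat -> (1 <= j)%nat ->
      walk alpha b1 b2 j = n -> (j <= k)%nat.

(* m \in S_p  <->  m >= 1 and p(m) > p, i.e. there are at least p+1
   distinct m-good pairs (p(m) may be infinite). *)
Definition in_Sp (alpha p m : nat) : Prop :=
  (1 <= m)%nat /\
  exists l : list (nat * nat), NoDup l /\ length l = S p /\
    Forall (fun ab => good alpha m (fst ab) (snd ab)) l.

Definition in_Sp_b (alpha p m : nat) : bool :=
  if excluded_middle_informative (in_Sp alpha p m) then true else false.

Definition count_Sp (alpha p N : nat) : nat :=
  length (filter (in_Sp_b alpha p) (seq 1 N)).

Definition gamma (alpha : nat) : R :=
  (INR alpha + sqrt (INR alpha ^ 2 + 4)) / 2.
Definition lambda (alpha : nat) : R :=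
  (INR alpha - sqrt (INR alpha ^ 2 + 4)) / 2.

Definition ncr (alpha : nat) (c : R) (r : nat) : nat :=
  Z.to_nat (Int_part (c / (gamma alpha - lambda alpha) ^ 2
                        * gamma alpha ^ (2 * r + 1))).

From Stdlib Require Import Reals Lra Lia List ZArith.
Import ListNotations.
Open Scope R_scope.

(* Let U be the Lucas sequence of alpha (U_0 = 0, U_1 = 1, U_(k+2) = alpha U_(k+1) + U_k), so that
   w_(i+3)(a, b) = a U_(i+1) + b U_(i+2).  Every m <= alpha has infinitely many good pairs.  For
   m > alpha, comparing representations at consecutive levels shows that m lies in S_p iff
   m = a U_(i+1) + b U_(i+2) for a (unique) triple with 1 <= a <= U_(i+2) and
   p U_(i+1) < b <= alpha a; the m-good pairs are then the (a + t U_(i+2), b - t U_(i+1)) with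
   positive second coordinate.  Hence |S_p /\ [N]| is alpha plus the number of such triples of
   value at most N, and for N = n_(c,r) the hypotheses 1 <= c <= p gamma / alpha squeeze this
   between the triples of levels i < r - 2 and those of levels i <= r - 2.  Level i holds
   alpha/2 (U_(i+2) - p U_(i+1) / alpha)^2 + O(gamma^i) triples, which by Binet's formula is
   alpha/2 (1 - p/(alpha gamma))^2 gamma^(2i+4) / (gamma - lambda)^2 + O(gamma^i); summing the
   geometric series and dividing by n_(c,r) ~ gamma^(2r) leaves an error O(gamma^(-r)). *)

Section Walks.
Open Scope nat_scope.
Variable al : nat.

Fixpoint lucas (m : nat) : nat :=
  match m with
  | O => 0
  | S m1 => match m1 with O => 1 | S m2 => al * lucas m1 + lucas m2 end
  end.

Lemma lucas_SS m : lucas (S (S m)) = al * lucas (S m) + lucas m.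
Proof. reflexivity. Qed.

Lemma wpair_S a1 a2 k :
  wpair al a1 a2 (S k) =
  (a1 * lucas k + a2 * lucas (S k), a1 * lucas (S k) + a2 * lucas (S (S k))).
Proof.
  induction k as [|k IH]; [cbn; f_equal; lia|].
  change (wpair al a1 a2 (S (S k)))
    with (let (x, y) := wpair al a1 a2 (S k) in (y, al * y + x)).
  rewrite IH, (lucas_SS (S k)), (lucas_SS k). f_equal. ring.
Qed.

Lemma walk_SS a1 a2 k : walk al a1 a2 (S (S k)) = a1 * lucas k + a2 * lucas (S k).
Proof. unfold walk. replace (S (S k) - 1) with (S k) by lia. now rewrite wpair_S. Qed.

Lemma wpair_shift a1 a2 j : wpair al a1 a2 (S j) = wpair al a2 (al * a2 + a1) j.
Proof.
  induction j as [|j IH]; [reflexivity|].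
  change (wpair al a1 a2 (S (S j)))
    with (let (x, y) := wpair al a1 a2 (S j) in (y, al * y + x)).
  now rewrite IH.
Qed.

Lemma walk_shift a1 a2 j : walk al a1 a2 (S (S j)) = walk al a2 (al * a2 + a1) (S j).
Proof.
  unfold walk. replace (S (S j) - 1) with (S j) by lia. replace (S j - 1) with j by lia.
  now rewrite wpair_shift.
Qed.

Lemma walk_descend b1 b2 j m n : 1 <= b1 -> 1 <= b2 -> 1 <= m -> m <= j ->
  walk al b1 b2 j = n -> exists c1 c2, 1 <= c1 /\ 1 <= c2 /\ walk al c1 c2 m = n.
Proof.
  intros H1 H2 Hm Hj. revert b1 b2 H1 H2.
  induction Hj as [|j Hj IH]; intros b1 b2 H1 H2 Hw; [now exists b1, b2|].
  destruct j as [|j]; [lia|]. rewrite walk_shift in Hw.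
  apply (IH b2 (al * b2 + b1)); auto; lia.
Qed.

Lemma lucas_kernel m (x y : Z) :
  (x * Z.of_nat (lucas m) + y * Z.of_nat (lucas (S m)) = 0)%Z ->
  exists t, x = (t * Z.of_nat (lucas (S m)))%Z /\ y = (- t * Z.of_nat (lucas m))%Z.
Proof.
  revert x y. induction m as [|m IH]; intros x y H.
  - exists x. simpl in *. lia.
  - rewrite lucas_SS, Nat2Z.inj_add, Nat2Z.inj_mul in H.
    destruct (IH y (x + Z.of_nat al * y)%Z) as [t [Ht1 Ht2]]; [nia|].
    exists (- t)%Z. rewrite lucas_SS, Nat2Z.inj_add, Nat2Z.inj_mul. split; nia.
Qed.

Lemma lucas_level_eq i a b c d :
  a * lucas (S i) + b * lucas (S (S i)) = c * lucas (S i) + d * lucas (S (S i)) ->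
  exists t, (Z.of_nat c - Z.of_nat a = t * Z.of_nat (lucas (S (S i))))%Z /\
            (Z.of_nat d - Z.of_nat b = - t * Z.of_nat (lucas (S i)))%Z.
Proof.
  intros H. apply lucas_kernel.
  apply (f_equal Z.of_nat) in H. rewrite !Nat2Z.inj_add, !Nat2Z.inj_mul in H. lia.
Qed.

Hypothesis al_pos : 1 <= al.

Lemma lucas_pos m : 1 <= m -> 1 <= lucas m.
Proof.
  induction m as [m IH] using lt_wf_ind. intros Hm.
  destruct m as [|[|m]]; [lia|simpl; lia|].
  rewrite lucas_SS. specialize (IH (S m) ltac:(lia) ltac:(lia)). nia.
Qed.

Lemma lucas_le_S m : lucas m <= lucas (S m).
Proof. destruct m as [|m]; [simpl; lia|]. rewrite lucas_SS. nia. Qed.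

Lemma lucas_mono m n : m <= n -> lucas m <= lucas n.
Proof. induction 1; [lia|]. pose proof (lucas_le_S m0). lia. Qed.

Lemma lucas_ge_index m : m <= lucas (S m) + 1.
Proof.
  induction m as [m IH] using lt_wf_ind.
  destruct m as [|[|m]]; [lia|simpl; lia|].
  rewrite lucas_SS. specialize (IH (S m) ltac:(lia)).
  pose proof (lucas_pos (S m) ltac:(lia)). nia.
Qed.

Lemma lucas_level_eq_nat i a b c d : 1 <= c -> a <= lucas (S (S i)) ->
  a * lucas (S i) + b * lucas (S (S i)) = c * lucas (S i) + d * lucas (S (S i)) ->
  exists t, c = a + t * lucas (S (S i)) /\ d + t * lucas (S i) = b.
Proof.
  intros Hc Ha E. destruct (lucas_level_eq i a b c d E) as (t & H1 & H2).
  pose proof (lucas_pos (S (S i)) ltac:(lia)).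
  assert (0 <= t)%Z by (destruct (Z.le_gt_cases 0 t); nia).
  exists (Z.to_nat t). split; apply Nat2Z.inj; rewrite Nat2Z.inj_add, Nat2Z.inj_mul, Z2Nat.id; lia.
Qed.

End Walks.

Lemma NoDup_nat_has_ge (l : list nat) (p : nat) :
  NoDup l -> length l = S p -> exists t, In t l /\ (p <= t)%nat.
Proof.
  intros Hnd Hlen.
  destruct (existsb (fun t => Nat.leb p t) l) eqn:E.
  - apply existsb_exists in E as (t & Ht & Hle). apply Nat.leb_le in Hle. now exists t.
  - exfalso.
    assert (Hincl : incl l (seq 0 p)).
    { intros t Ht. apply in_seq. split; [lia|].
      destruct (Nat.leb p t) eqn:Hpt; [|apply Nat.leb_gt in Hpt; lia].
      rewrite <- Bool.not_true_iff_false, existsb_exists in E. exfalso. eauto. }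
    pose proof (NoDup_incl_length Hnd Hincl). rewrite length_seq in *. lia.
Qed.

Lemma reduce_first_coef (A B m a1 a2 : nat) : (1 <= B)%nat -> (1 <= a1)%nat -> (1 <= a2)%nat ->
  (a1 * A + a2 * B = m)%nat ->
  exists a0 b0, (1 <= a0 <= B)%nat /\ (1 <= b0)%nat /\ (a0 * A + b0 * B = m)%nat.
Proof.
  intros HB Ha1 Ha2 Hm.
  pose proof (Nat.div_mod (a1 - 1) B ltac:(lia)).
  pose proof (Nat.mod_upper_bound (a1 - 1) B ltac:(lia)).
  exists ((a1 - 1) mod B + 1)%nat, (a2 + (a1 - 1) / B * A)%nat. nia.
Qed.

Section Triangle.
Open Scope nat_scope.
Variables al p : nat.
Hypothesis al_pos : 1 <= al.

Definition in_triangle i a b : Prop :=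
  1 <= a <= lucas al (S (S i)) /\ p * lucas al (S i) + 1 <= b <= al * a.

Definition tri_value i a b : nat := a * lucas al (S i) + b * lucas al (S (S i)).

Lemma walk_tri_value i a b : walk al a b (S (S (S i))) = tri_value i a b.
Proof. apply walk_SS. Qed.

Lemma tri_value_gt i a b : in_triangle i a b -> al < tri_value i a b.
Proof.
  intros [Ha Hb]. unfold tri_value.
  pose proof (lucas_pos al al_pos (S i) ltac:(lia)).
  assert (al <= lucas al (S (S i))) by (rewrite lucas_SS; nia).
  nia.
Qed.

Lemma walk_index_le i a b c1 c2 j : in_triangle i a b -> 1 <= c1 -> 1 <= c2 -> 1 <= j ->
  walk al c1 c2 j = tri_value i a b -> j <= S (S (S i)).
Proof.
  intros [Ha Hb] H1 H2 Hj Hw.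
  destruct (Nat.le_gt_cases j (S (S (S i)))) as [|Hlt]; [assumption|exfalso].
  destruct (walk_descend al c1 c2 j (S (S (S (S i)))) _ H1 H2 ltac:(lia) Hlt Hw)
    as (d1 & d2 & Hd1 & Hd2 & Hw').
  rewrite walk_shift, walk_SS in Hw'.
  destruct (lucas_level_eq al i d2 (al * d2 + d1) a b Hw') as (t & Ht1 & Ht2).
  pose proof (lucas_pos al al_pos (S i) ltac:(lia)).
  pose proof (lucas_pos al al_pos (S (S i)) ltac:(lia)).
  destruct (Z.le_gt_cases t 0); nia.
Qed.

Lemma in_triangle_in_Sp i a b : in_triangle i a b -> in_Sp al p (tri_value i a b).
Proof.
  intros HT. pose proof (tri_value_gt i a b HT). destruct HT as [Ha Hb].
  pose proof (lucas_pos al al_pos (S i) ltac:(lia)).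
  split; [lia|].
  exists (map (fun t => (a + t * lucas al (S (S i)), b - t * lucas al (S i))) (seq 0 (S p))).
  split; [|split].
  - apply NoDup_map_NoDup_ForallPairs; [|apply seq_NoDup].
    intros x y _ _ E. apply (f_equal fst) in E. cbn [fst] in E.
    apply Nat.add_cancel_l, Nat.mul_cancel_r in E; lia.
  - now rewrite length_map, length_seq.
  - apply Forall_forall. intros [x y] Hin. apply in_map_iff in Hin.
    destruct Hin as (t & Et & Ht). apply in_seq in Ht. apply pair_equal_spec in Et as [<- <-].
    assert (t * lucas al (S i) <= p * lucas al (S i)) by nia.
    cbn [fst snd]. split; [lia|]. split; [lia|]. exists (S (S (S i))). split; [lia|]. split.
    + rewrite walk_tri_value. unfold tri_value.
      rewrite Nat.mul_sub_distr_r. nia.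
    + intros b1 b2 j Hb1 Hb2 Hj Hw. apply (walk_index_le i a b b1 b2 j); auto. split; auto.
Qed.

Lemma tri_value_inj i a b i' a' b' : in_triangle i a b -> in_triangle i' a' b' ->
  tri_value i a b = tri_value i' a' b' -> i = i' /\ a = a' /\ b = b'.
Proof.
  intros H1 H2 E.
  assert (S (S (S i')) <= S (S (S i))).
  { destruct H2. apply (walk_index_le i a b a' b'); try lia; [exact H1|].
    now rewrite walk_tri_value. }
  assert (S (S (S i)) <= S (S (S i'))).
  { destruct H1. apply (walk_index_le i' a' b' a b); try lia; [exact H2|].
    now rewrite walk_tri_value. }
  assert (i = i') as <- by lia. split; [reflexivity|].
  destruct (lucas_level_eq al i a b a' b' E) as (t & Ht1 & Ht2).
  destruct H1 as [Ha Hb], H2 as [Ha' Hb'].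
  pose proof (lucas_pos al al_pos (S (S i)) ltac:(lia)).
  assert (t = 0%Z) as -> by (destruct (Z.le_gt_cases t 0), (Z.le_gt_cases 0 t); nia).
  lia.
Qed.

Lemma small_in_Sp m : 1 <= m <= al -> in_Sp al p m.
Proof.
  intros Hm. split; [lia|].
  exists (map (fun t => (S t, m)) (seq 0 (S p))). split; [|split].
  - apply NoDup_map_NoDup_ForallPairs; [|apply seq_NoDup]. intros x y _ _ E. injection E; lia.
  - now rewrite length_map, length_seq.
  - apply Forall_forall. intros [x y] Hin. apply in_map_iff in Hin.
    destruct Hin as (t & Et & _). apply pair_equal_spec in Et as [<- <-].
    cbn [fst snd]. split; [lia|]. split; [lia|]. exists 2. split; [lia|]. split.
    + rewrite walk_SS. simpl. lia.
    + intros b1 b2 j Hb1 Hb2 Hj Hw.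
      destruct (Nat.le_gt_cases j 2) as [|Hj3]; [assumption|exfalso].
      destruct (walk_descend al b1 b2 j 3 _ Hb1 Hb2 ltac:(lia) ltac:(lia) Hw)
        as (d1 & d2 & Hd1 & Hd2 & Hw').
      rewrite walk_SS in Hw'. simpl in Hw'. nia.
Qed.

Lemma good_walk_at m a1 a2 k c1 c2 :
  1 <= a1 -> 1 <= a2 -> 1 <= k -> walk al a1 a2 k = m ->
  (forall b1 b2 j, 1 <= b1 -> 1 <= b2 -> 1 <= j -> walk al b1 b2 j = m -> j <= k) ->
  good al m c1 c2 -> walk al c1 c2 k = m.
Proof.
  intros Ha1 Ha2 Hk Hw Hmax (Hc1 & Hc2 & k' & Hk' & Hw' & Hmax').
  specialize (Hmax c1 c2 k' Hc1 Hc2 Hk' Hw'). specialize (Hmax' a1 a2 k Ha1 Ha2 Hk Hw).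
  now replace k with k' by lia.
Qed.

(* Each representation is (a0 + t U_(i+2), b0 - t U_(i+1)) for some t >= 0; p + 1 distinct
   ones need some t >= p, and b0 - t U_(i+1) >= 1 then forces b0 > p U_(i+1). *)
Lemma level_reps_bound i a0 b0 (L : list (nat * nat)) :
  1 <= a0 <= lucas al (S (S i)) -> NoDup L -> length L = S p ->
  (forall c, In c L ->
     1 <= fst c /\ 1 <= snd c /\ tri_value i (fst c) (snd c) = tri_value i a0 b0) ->
  p * lucas al (S i) + 1 <= b0.
Proof.
  intros Ha0 Hnd Hlen HL. unfold tri_value in HL.
  set (A := lucas al (S i)) in *. set (B := lucas al (S (S i))) in *.
  pose proof (lucas_pos al al_pos (S (S i)) ltac:(lia)) as HB.
  set (f (c : nat * nat) := (fst c - a0) / B).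
  assert (Hf : forall c, In c L -> fst c = a0 + f c * B /\ snd c + f c * A = b0).
  { intros c Hc. destruct (HL c Hc) as (Hc1 & Hc2 & Hcm).
    destruct (lucas_level_eq_nat al al_pos i a0 b0 (fst c) (snd c)) as (t & E1 & E2); try lia.
    assert (f c = t) as -> by (unfold f; rewrite E1, Nat.add_sub_swap, Nat.sub_diag,
      Nat.add_0_l, Nat.div_mul by lia; reflexivity).
    auto. }
  assert (Hnd' : NoDup (map f L)).
  { apply NoDup_map_NoDup_ForallPairs; auto. intros [x1 x2] [y1 y2] Hx Hy E.
    destruct (Hf _ Hx), (Hf _ Hy). cbn [fst snd] in *. f_equal; lia. }
  destruct (NoDup_nat_has_ge (map f L) p Hnd') as (t & Ht & Hpt); [now rewrite length_map|].
  apply in_map_iff in Ht as (c & <- & Hc). destruct (Hf c Hc), (HL c Hc). nia.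
Qed.

Lemma in_Sp_triangle m : al < m -> in_Sp al p m ->
  exists i a b, in_triangle i a b /\ tri_value i a b = m.
Proof.
  intros Hm (_ & L & Hnd & Hlen & Hgood).
  destruct L as [|[a1 a2] L']; [discriminate|].
  destruct (Forall_inv Hgood) as (Ha1 & Ha2 & k & Hk & Hw & Hmax). cbn [fst snd] in *.
  assert (Hk3 : 3 <= k) by (apply (Hmax (m - al) 1 3); try lia; rewrite walk_SS; simpl; lia).
  destruct k as [|[|[|i]]]; try lia.
  set (L := (a1, a2) :: L') in *.
  assert (HL : forall c, In c L -> 1 <= fst c /\ 1 <= snd c /\ tri_value i (fst c) (snd c) = m).
  { intros c Hc. rewrite Forall_forall in Hgood. destruct (Hgood c Hc) as (Hc1 & Hc2 & _).
    split; [exact Hc1|]. split; [exact Hc2|].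
    rewrite <- walk_tri_value. now apply (good_walk_at m a1 a2), Hgood. }
  destruct (reduce_first_coef (lucas al (S i)) (lucas al (S (S i))) m a1 a2)
    as (a0 & b0 & Ha0 & Hb0 & Hv); auto using lucas_pos with arith.
  { apply (HL (a1, a2)). now left. }
  change (tri_value i a0 b0 = m) in Hv.
  exists i, a0, b0. split; [|exact Hv]. split; [exact Ha0|]. split.
  - apply (level_reps_bound i a0 b0 L); auto. rewrite Hv. exact HL.
  - destruct (Nat.le_gt_cases b0 (al * a0)) as [|Hgt]; [assumption|exfalso].
    assert (S (S (S (S i))) <= S (S (S i))); [|lia].
    apply (Hmax (b0 - al * a0) a0); try lia.
    rewrite walk_shift, walk_tri_value. now replace (al * a0 + (b0 - al * a0)) with b0 by lia.
Qed.

End Triangle.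

Section Counting.
Open Scope nat_scope.
Variables al p : nat.

(* The number of lattice points with 1 <= a <= B and P < b <= al a. *)
Fixpoint band_count (P B : nat) : nat :=
  match B with O => O | S B' => band_count P B' + (al * S B' - P) end.

Fixpoint triangle_count (n : nat) : nat :=
  match n with
  | O => O
  | S n' => triangle_count n' + band_count (p * lucas al (S n')) (lucas al (S (S n')))
  end.

Fixpoint band_list (i B : nat) : list (nat * nat * nat) :=
  match B with
  | O => []
  | S B' => band_list i B' ++
      map (fun b => (i, S B', b)) (seq (p * lucas al (S i) + 1) (al * S B' - p * lucas al (S i)))
  end.

Fixpoint triangle_list (n : nat) : list (nat * nat * nat) :=
  match n with
  | O => []
  | S n' => triangle_list n' ++ band_list n' (lucas al (S (S n')))
  end.

Definition triple_value (t : nat * nat * nat) : nat :=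
  let '(i, a, b) := t in tri_value al i a b.

Lemma in_band_list i B i' a b : In (i', a, b) (band_list i B) <->
  i' = i /\ 1 <= a <= B /\ p * lucas al (S i) + 1 <= b <= al * a.
Proof.
  induction B as [|B IH]; cbn [band_list].
  - simpl. lia.
  - rewrite in_app_iff, IH, in_map_iff. split.
    + intros [H|(x & Ex & Hx)]; [lia|]. apply in_seq in Hx. injection Ex as <- <- <-. lia.
    + intros (-> & Ha & Hb). destruct (Nat.eq_dec a (S B)) as [->|Hne]; [|left; lia].
      right. exists b. split; [reflexivity|]. apply in_seq. lia.
Qed.

Lemma length_band_list i B : length (band_list i B) = band_count (p * lucas al (S i)) B.
Proof.
  induction B as [|B IH]; [reflexivity|]. cbn [band_list band_count].
  now rewrite length_app, IH, length_map, length_seq.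
Qed.

Lemma NoDup_band_list i B : NoDup (band_list i B).
Proof.
  induction B as [|B IH]; cbn [band_list]; [constructor|]. apply NoDup_app; auto.
  - apply NoDup_map_NoDup_ForallPairs; [|apply seq_NoDup]. intros x y _ _ E. now injection E.
  - intros [[i' a] b] H1 H2. apply in_band_list in H1. apply in_map_iff in H2.
    destruct H2 as (x & Ex & _). injection Ex. lia.
Qed.

Lemma in_triangle_list n i a b : In (i, a, b) (triangle_list n) <-> i < n /\ in_triangle al p i a b.
Proof.
  unfold in_triangle. induction n as [|n IH]; cbn [triangle_list].
  - simpl. lia.
  - rewrite in_app_iff, IH, in_band_list. split.
    + intros [H|(-> & H)]; [lia|]. split; [lia|exact H].
    + intros [Hi H]. destruct (Nat.eq_dec i n) as [->|]; [now right|left; lia].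
Qed.

Lemma length_triangle_list n : length (triangle_list n) = triangle_count n.
Proof.
  induction n as [|n IH]; [reflexivity|]. cbn [triangle_list triangle_count].
  now rewrite length_app, IH, length_band_list.
Qed.

Lemma NoDup_triangle_list n : NoDup (triangle_list n).
Proof.
  induction n as [|n IH]; cbn [triangle_list]; [constructor|].
  apply NoDup_app; auto using NoDup_band_list.
  intros [[i a] b] H1 H2. apply in_triangle_list in H1. apply in_band_list in H2. lia.
Qed.

Hypothesis al_pos : 1 <= al.

Lemma NoDup_map_triple_value l : NoDup l ->
  (forall i a b, In (i, a, b) l -> in_triangle al p i a b) -> NoDup (map triple_value l).
Proof.
  intros Hnd HT. apply NoDup_map_NoDup_ForallPairs; auto.
  intros [[i a] b] [[i' a'] b'] H1 H2 E.
  now destruct (tri_value_inj al p al_pos i a b i' a' b' (HT _ _ _ H1) (HT _ _ _ H2) E)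
    as (-> & -> & ->).
Qed.

Lemma in_Sp_b_iff m : in_Sp_b al p m = true <-> in_Sp al p m.
Proof.
  unfold in_Sp_b. destruct (ClassicalEpsilon.excluded_middle_informative _);
    split; auto; discriminate.
Qed.

Lemma count_Sp_le N s :
  (forall i a b, in_triangle al p i a b -> s < i -> N < tri_value al i a b) ->
  count_Sp al p N <= al + triangle_count (S s).
Proof.
  intros Hhi. unfold count_Sp.
  transitivity (length (seq 1 al ++ map triple_value (triangle_list (S s)))).
  2:{ rewrite length_app, length_seq, length_map, length_triangle_list. lia. }
  apply NoDup_incl_length; [apply NoDup_filter, seq_NoDup|].
  intros m Hm. apply filter_In in Hm as [Hm Hsp]. apply in_seq in Hm.
  apply in_Sp_b_iff in Hsp. apply in_app_iff.
  destruct (Nat.le_gt_cases m al) as [Hle|Hgt]; [left; apply in_seq; lia|right].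
  destruct (in_Sp_triangle al p al_pos m Hgt Hsp) as (i & a & b & HT & Hv).
  apply in_map_iff. exists (i, a, b). split; [exact Hv|]. apply in_triangle_list.
  split; [|exact HT]. destruct (Nat.le_gt_cases i s); [lia|].
  specialize (Hhi i a b HT ltac:(lia)). lia.
Qed.

Lemma count_Sp_ge N s : al <= N ->
  (forall i a b, in_triangle al p i a b -> i < s \/ (i = s /\ a < lucas al (S (S s))) ->
     tri_value al i a b <= N) ->
  al + triangle_count s + band_count (p * lucas al (S s)) (lucas al (S (S s)) - 1)
  <= count_Sp al p N.
Proof.
  intros HN Hlo. unfold count_Sp.
  set (l := triangle_list s ++ band_list s (lucas al (S (S s)) - 1)).
  assert (Hl : forall i a b, In (i, a, b) l ->
            in_triangle al p i a b /\ (i < s \/ (i = s /\ a < lucas al (S (S s))))).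
  { intros i a b H. apply in_app_iff in H as [H|H].
    - apply in_triangle_list in H. tauto.
    - apply in_band_list in H as (-> & H). unfold in_triangle. lia. }
  transitivity (length (seq 1 al ++ map triple_value l)).
  { unfold l. rewrite length_app, length_seq, length_map, length_app, length_triangle_list,
      length_band_list. lia. }
  apply NoDup_incl_length.
  - apply NoDup_app; [apply seq_NoDup| |].
    + apply NoDup_map_triple_value; [|intros i a b H; apply (Hl i a b H)].
      apply NoDup_app; [apply NoDup_triangle_list|apply NoDup_band_list|].
      intros [[i a] b] H1 H2. apply in_triangle_list in H1. apply in_band_list in H2. lia.
    + intros m H1 H2. apply in_seq in H1. apply in_map_iff in H2 as ([[i a] b] & <- & H).
      pose proof (tri_value_gt al p al_pos i a b (proj1 (Hl i a b H))). cbn in *. lia.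
  - intros m Hm. apply filter_In. rewrite in_Sp_b_iff. apply in_app_iff in Hm as [Hm|Hm].
    + apply in_seq in Hm. split; [apply in_seq; lia|]. apply small_in_Sp; lia.
    + apply in_map_iff in Hm as ([[i a] b] & <- & H). destruct (Hl i a b H) as [HT Hr].
      pose proof (tri_value_gt al p al_pos i a b HT). specialize (Hlo i a b HT Hr).
      cbn [triple_value]. split; [apply in_seq; lia|]. now apply in_triangle_in_Sp.
Qed.

End Counting.

Lemma neg1_pow m : (-1) ^ m = 1 \/ (-1) ^ m = -1.
Proof. induction m as [|m [IH | IH]]; simpl; [left|right|left]; try rewrite IH; lra. Qed.

Lemma INR_sub_Rmax m n : INR (m - n) = Rmax 0 (INR m - INR n).
Proof.
  unfold Rmax. destruct (Nat.le_gt_cases n m) as [H|H].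
  - rewrite minus_INR by exact H. apply le_INR in H. destruct (Rle_dec 0 _); lra.
  - replace (m - n)%nat with 0%nat by lia. apply lt_INR in H. destruct (Rle_dec 0 _); simpl; lra.
Qed.

Lemma Rmax_sq_step a x y : 1 <= a -> 0 <= x -> 0 <= y ->
  let h z := a / 2 * (Rmax 0 (z - x)) ^ 2 in
  h (y + 1) - h y <= Rmax 0 (a * (y + 1) - a * x) <= h (y + 1) - h y + a.
Proof.
  intros Ha Hx Hy h. unfold h, Rmax.
  destruct (Rle_dec 0 (y + 1 - x)), (Rle_dec 0 (y - x)), (Rle_dec 0 (a * (y + 1) - a * x));
    split; nra.
Qed.

Lemma Rabs_sign_quadratic_le u v L e U0 V0 : (e = 1 \/ e = -1) -> -1 <= L <= 1 ->
  -U0 <= u <= U0 -> -V0 <= v <= V0 ->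
  Rabs (-2 * e * u * v + L ^ 2 * v ^ 2) <= 2 * U0 * V0 + V0 ^ 2.
Proof.
  intros He HL Hu Hv. apply Rabs_le.
  assert (0 <= (U0 - u) * (V0 - v)) by (apply Rmult_le_pos; lra).
  assert (0 <= (U0 + u) * (V0 + v)) by (apply Rmult_le_pos; lra).
  assert (0 <= (U0 - u) * (V0 + v)) by (apply Rmult_le_pos; lra).
  assert (0 <= (U0 + u) * (V0 - v)) by (apply Rmult_le_pos; lra).
  assert (0 <= L ^ 2 * v ^ 2 <= V0 ^ 2).
  { assert (L ^ 2 <= 1) by nra. assert (v ^ 2 <= V0 ^ 2) by nra. split; nra. }
  destruct He as [-> | ->]; split; nra.
Qed.

Lemma Rabs_le_inv x b : Rabs x <= b -> - b <= x <= b.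
Proof.
  intros H. pose proof (Rle_abs x). pose proof (Rle_abs (- x)). rewrite Rabs_Ropp in *. lra.
Qed.

Lemma Rabs_ratio_sub_le x t N G C Dn : 0 < Dn -> 1 <= G -> 0 <= C -> G * G / Dn <= N ->
  Rabs (x - t * N) <= C * G -> Rabs (x / N - t) <= C * Dn * / G.
Proof.
  intros HD HG HC HN Hx.
  assert (HN0 : 0 < N) by (eapply Rlt_le_trans; [|exact HN]; apply Rdiv_lt_0_compat; nra).
  replace (x / N - t) with ((x - t * N) / N) by (field; lra).
  unfold Rdiv. rewrite Rabs_mult, (Rabs_right (/ N))
    by (apply Rle_ge, Rlt_le, Rinv_0_lt_compat; lra).
  assert (HinvN : / N <= Dn / (G * G)).
  { replace (Dn / (G * G)) with (/ (G * G / Dn)) by (field; split; nra).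
    apply Rinv_le_contravar; [apply Rdiv_lt_0_compat; nra | exact HN]. }
  eapply Rle_trans.
  - apply Rmult_le_compat; [apply Rabs_pos | apply Rlt_le, Rinv_0_lt_compat; lra | exact Hx |
      exact HinvN].
  - right. field. lra.
Qed.

Section Gamma.
Variable al : nat.
Hypothesis al_pos : (1 <= al)%nat.
Let a := INR al.
Let g := gamma al.
Let l := lambda al.

Lemma alpha_ge1 : 1 <= a.
Proof. apply (le_INR 1), al_pos. Qed.

Lemma sqrt_disc_bounds : let d := sqrt (a ^ 2 + 4) in
  d * d = a ^ 2 + 4 /\ a < d /\ 2 <= d /\ d < a + 2.
Proof.
  intros d. pose proof alpha_ge1.
  assert (Hd : d * d = a ^ 2 + 4) by (apply sqrt_sqrt; nra).
  pose proof (sqrt_pos (a ^ 2 + 4)). fold d in H0. repeat split; nra.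
Qed.

Lemma gamma_plus_lambda : g + l = a.
Proof. unfold g, l, a, gamma, lambda. field. Qed.

Lemma gamma_mul_lambda : g * l = -1.
Proof. destruct sqrt_disc_bounds as [Hd _]. unfold g, l, gamma, lambda. fold a. nra. Qed.

Lemma gamma_minus_lambda_sq : (g - l) ^ 2 = a ^ 2 + 4.
Proof.
  destruct sqrt_disc_bounds as [Hd _].
  replace (g - l) with (sqrt (a ^ 2 + 4)) by (unfold g, l, a, gamma, lambda; field). nra.
Qed.

Lemma gamma_ge : 3 / 2 <= g.
Proof. pose proof sqrt_disc_bounds. pose proof alpha_ge1. unfold g, gamma. fold a. lra. Qed.

Lemma lambda_bounds : -1 < l < 0.
Proof. pose proof sqrt_disc_bounds. unfold l, lambda. fold a. lra. Qed.

Lemma gamma_sq : g ^ 2 = a * g + 1.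
Proof. rewrite <- gamma_plus_lambda. pose proof gamma_mul_lambda. nra. Qed.

Lemma lambda_sq : l ^ 2 = a * l + 1.
Proof. rewrite <- gamma_plus_lambda. pose proof gamma_mul_lambda. nra. Qed.

Lemma lucas_binet m : INR (lucas al m) = (g ^ m - l ^ m) / (g - l).
Proof.
  pose proof gamma_ge. pose proof lambda_bounds.
  induction m as [m IH] using lt_wf_ind.
  destruct m as [|[|m]]; [simpl; field; lra .. |].
  rewrite lucas_SS, plus_INR, mult_INR, (IH (S m)), (IH m) by lia. fold a.
  replace (g ^ S (S m)) with ((a * g + 1) * g ^ m) by (rewrite <- gamma_sq; simpl; ring).
  replace (l ^ S (S m)) with ((a * l + 1) * l ^ m) by (rewrite <- lambda_sq; simpl; ring).
  simpl. field. lra.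
Qed.

Lemma lambda_pow_bound m : -1 <= l ^ m <= 1.
Proof. pose proof lambda_bounds. induction m; simpl; nra. Qed.

Lemma gamma_pow_ge1 m : 1 <= g ^ m.
Proof. apply pow_R1_Rle. pose proof gamma_ge. lra. Qed.

Lemma gamma_lambda_pow m : g ^ m * l ^ m = (-1) ^ m.
Proof. now rewrite <- Rpow_mult_distr, gamma_mul_lambda. Qed.

Lemma lucas_le_gamma_pow m : INR (lucas al m) <= g ^ m.
Proof.
  rewrite lucas_binet. pose proof gamma_minus_lambda_sq. pose proof gamma_ge.
  pose proof lambda_bounds. pose proof (lambda_pow_bound m). pose proof (gamma_pow_ge1 m).
  apply Rmult_le_reg_r with (g - l); [lra|]. unfold Rdiv. rewrite Rmult_assoc, Rinv_l; nra.
Qed.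

Lemma lucas_mul_S_le r :
  INR (lucas al r) * INR (lucas al (S r)) <= (g ^ (2 * r + 1) + a + 1) / (g - l) ^ 2.
Proof.
  rewrite !lucas_binet. pose proof gamma_ge. pose proof lambda_bounds.
  replace ((g ^ r - l ^ r) / (g - l) * ((g ^ S r - l ^ S r) / (g - l)))
    with ((g ^ (2 * r + 1) - (g ^ r * l ^ r) * (g + l) + l ^ (2 * r + 1)) / (g - l) ^ 2)
    by (replace (2 * r + 1)%nat with (r + r + 1)%nat by lia; rewrite !pow_add; simpl; field; lra).
  apply Rmult_le_compat_r; [apply Rlt_le, Rinv_0_lt_compat; nra|].
  pose proof (lambda_pow_bound (2 * r + 1)). pose proof alpha_ge1.
  rewrite gamma_lambda_pow, gamma_plus_lambda. destruct (neg1_pow r) as [-> | ->]; lra.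
Qed.

Lemma lucas_mul_SS_ge r :
  (g ^ (2 * r + 2) - (a ^ 2 + 2)) / (g - l) ^ 2 <= INR (lucas al r) * INR (lucas al (S (S r))).
Proof.
  rewrite !lucas_binet. pose proof gamma_ge. pose proof lambda_bounds.
  replace ((g ^ r - l ^ r) / (g - l) * ((g ^ S (S r) - l ^ S (S r)) / (g - l)))
    with ((g ^ (2 * r + 2) - (g ^ r * l ^ r) * (g ^ 2 + l ^ 2) + l ^ (2 * r + 2)) / (g - l) ^ 2)
    by (replace (2 * r + 2)%nat with (r + r + 2)%nat by lia; rewrite !pow_add; simpl; field; lra).
  apply Rmult_le_compat_r; [apply Rlt_le, Rinv_0_lt_compat; nra|].
  assert (Hs : g ^ 2 + l ^ 2 = a ^ 2 + 2).
  { rewrite <- gamma_plus_lambda. pose proof gamma_mul_lambda. nra. }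
  assert (0 <= l ^ (2 * r + 2)).
  { replace (2 * r + 2)%nat with (2 * (r + 1))%nat by lia. rewrite pow_mult. apply pow_le. nra. }
  pose proof alpha_ge1. rewrite gamma_lambda_pow, Hs. destruct (neg1_pow r) as [-> | ->]; nra.
Qed.

End Gamma.

Section Asymptotics.
Variables al p : nat.
Hypothesis al_pos : (1 <= al)%nat.
Let a := INR al.
Let g := gamma al.
Let l := lambda al.
Let q := / (a * g) * INR p.

Lemma band_count_bounds P B : let x := INR P / a in
  a / 2 * (Rmax 0 (INR B - x)) ^ 2 <= INR (band_count al P B)
  <= a / 2 * (Rmax 0 (INR B - x)) ^ 2 + a * INR B.
Proof.
  intros x. pose proof (alpha_ge1 al al_pos) as Ha. fold a in Ha.
  assert (Hx : 0 <= x)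
    by (unfold x, Rdiv; apply Rmult_le_pos; [apply pos_INR|apply Rlt_le, Rinv_0_lt_compat; lra]).
  induction B as [|B IH].
  - simpl. unfold Rmax. destruct (Rle_dec 0 (0 - x)); [replace (0 - x) with 0 by lra|]; simpl; lra.
  - cbn [band_count]. rewrite plus_INR, INR_sub_Rmax, mult_INR, S_INR. fold a.
    replace (INR P) with (a * x) by (unfold x; field; lra).
    pose proof (Rmax_sq_step a x (INR B) Ha Hx (pos_INR B)). simpl in *. lra.
Qed.

Lemma band_square_approx : exists K, forall i,
  Rabs (a / 2 * (INR (lucas al (S (S i))) - INR (p * lucas al (S i)) / a) ^ 2
        - a / 2 * (1 - q) ^ 2 * g ^ (2 * i + 4) / (g - l) ^ 2) <= K.
Proof.
  pose proof (alpha_ge1 al al_pos) as Ha. fold a in Ha.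
  pose proof (gamma_ge al al_pos) as Hg. fold g in Hg.
  pose proof (lambda_bounds al al_pos) as Hl. fold l in Hl.
  pose proof (gamma_minus_lambda_sq al al_pos) as HD. fold g l a in HD.
  pose proof (pos_INR p) as Hp.
  exists ((2 * (a * g + INR p) * (a + INR p) + (a + INR p) ^ 2) / (2 * a * (g - l) ^ 2)).
  intros i. rewrite mult_INR, !lucas_binet by exact al_pos. fold g l a. unfold q.
  set (G := g ^ S i). set (L := l ^ S i).
  replace (g ^ S (S i)) with (g * G) by reflexivity.
  replace (l ^ S (S i)) with (l * L) by reflexivity.
  replace (g ^ (2 * i + 4)) with (g ^ 2 * G ^ 2)
    by (unfold G; rewrite <- pow_mult, <- pow_add; f_equal; lia).
  set (u := a * g - INR p). set (v := a * l - INR p).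
  (* the leading terms [u^2 G^2] cancel, and [G L = (-1)^(i+1)] *)
  replace (a / 2 * ((g * G - l * L) / (g - l) - INR p * ((G - L) / (g - l)) / a) ^ 2 -
           a / 2 * (1 - / (a * g) * INR p) ^ 2 * (g ^ 2 * G ^ 2) / (g - l) ^ 2)
    with ((-2 * (G * L) * u * v + L ^ 2 * v ^ 2) / (2 * a * (g - l) ^ 2))
    by (unfold u, v; field; repeat split; nra).
  unfold Rdiv. rewrite Rabs_mult, (Rabs_right (/ _))
    by (apply Rle_ge, Rlt_le, Rinv_0_lt_compat; nra).
  apply Rmult_le_compat_r; [apply Rlt_le, Rinv_0_lt_compat; nra|].
  apply Rabs_sign_quadratic_le.
  - unfold G, L, g, l. rewrite gamma_lambda_pow by exact al_pos. apply neg1_pow.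
  - apply lambda_pow_bound, al_pos.
  - unfold u. split; nra.
  - unfold v. split; nra.
Qed.

Hypothesis p_le : (p <= al * al)%nat.

Lemma band_count_approx : exists K, forall i,
  Rabs (INR (band_count al (p * lucas al (S i)) (lucas al (S (S i))))
        - a / 2 * (1 - q) ^ 2 * g ^ (2 * i + 4) / (g - l) ^ 2) <= K * g ^ i.
Proof.
  destruct band_square_approx as [K2 HK2]. fold a g l q in HK2.
  pose proof (alpha_ge1 al al_pos) as Ha. fold a in Ha.
  pose proof (Rle_trans _ _ _ (Rabs_pos _) (HK2 O)) as HK2pos.
  exists (a * g ^ 2 + K2). intros i.
  pose proof (band_count_bounds (p * lucas al (S i)) (lucas al (S (S i)))) as HF.
  cbv zeta in HF. fold a in HF.
  rewrite Rmax_right in HF.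
  2:{ assert (HP : (p * lucas al (S i) <= al * lucas al (S (S i)))%nat)
        by (rewrite (lucas_SS al i); nia).
      apply le_INR in HP. rewrite (mult_INR al) in HP. fold a in HP.
      enough (INR (p * lucas al (S i)) / a <= INR (lucas al (S (S i)))) by lra.
      apply Rmult_le_reg_r with a; [lra|]. unfold Rdiv. rewrite Rmult_assoc, Rinv_l; lra. }
  specialize (HK2 i).
  pose proof (lucas_le_gamma_pow al al_pos (S (S i))) as HU. fold g in HU.
  pose proof (gamma_pow_ge1 al al_pos i). fold g in H.
  replace (g ^ S (S i)) with (g ^ 2 * g ^ i) in HU by (simpl; ring).
  assert (a * INR (lucas al (S (S i))) <= a * g ^ 2 * g ^ i)
    by (rewrite Rmult_assoc; apply Rmult_le_compat_l; lra).
  assert (0 <= a * INR (lucas al (S (S i)))) by (pose proof (pos_INR (lucas al (S (S i)))); nra).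
  assert (K2 <= K2 * g ^ i) by nra.
  apply Rabs_le_inv in HK2. apply Rabs_le. rewrite Rmult_plus_distr_r. lra.
Qed.

Lemma triangle_count_approx : exists K, forall n,
  Rabs (INR (triangle_count al p n)
        - / 2 * (1 - q) ^ 2 * (g ^ (2 * n + 3) - g ^ 3) / (g - l) ^ 2) <= K * g ^ n.
Proof.
  destruct band_count_approx as [K1 HK1].
  pose proof (gamma_ge al al_pos) as Hg. fold g in Hg.
  pose proof (alpha_ge1 al al_pos) as Ha. fold a in Ha.
  pose proof (gamma_minus_lambda_sq al al_pos) as HD. fold g l a in HD.
  assert (HK1pos : 0 <= K1)
    by (pose proof (Rle_trans _ _ _ (Rabs_pos _) (HK1 O)); simpl in *; lra).
  (* geometric summation: [K g^n + K1 g^n = K g^(n+1)] for [K = K1 / (g - 1)] *)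
  exists (K1 / (g - 1)). induction n as [|n IH].
  - simpl. match goal with |- Rabs ?x <= _ => replace x with 0 by (field; nra) end.
    rewrite Rabs_R0, Rmult_1_r. apply Rmult_le_pos; [lra|]. apply Rlt_le, Rinv_0_lt_compat. lra.
  - cbn [triangle_count]. rewrite plus_INR.
    pose proof (HK1 n) as Hn.
    replace (g ^ (2 * S n + 3)) with (g ^ (2 * n + 3) + a * g ^ (2 * n + 4)).
    2:{ replace (2 * S n + 3)%nat with (2 + (2 * n + 3))%nat by lia.
        replace (2 * n + 4)%nat with (1 + (2 * n + 3))%nat by lia.
        pose proof (gamma_sq al al_pos) as Hgs. fold g a in Hgs.
        rewrite !pow_add, Hgs. simpl. ring. }
    rewrite (Rabs_minus_sym _ _) at 1.
    match goal with |- Rabs (_ - (?T + ?F)) <= _ =>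
      replace (_ - (T + F))
        with (- ((T - / 2 * (1 - q) ^ 2 * (g ^ (2 * n + 3) - g ^ 3) / (g - l) ^ 2)
        + (F - a / 2 * (1 - q) ^ 2 * g ^ (2 * n + 4) / (g - l) ^ 2))) by (field; nra) end.
    rewrite Rabs_Ropp. eapply Rle_trans; [apply Rabs_triang|].
    replace (K1 / (g - 1) * g ^ S n) with (K1 / (g - 1) * g ^ n + K1 * g ^ n)
      by (simpl; field; lra).
    lra.
Qed.

End Asymptotics.

Section Main.
Variables al p : nat.
Variable c : R.
Hypothesis al_pos : (1 <= al)%nat.
Hypothesis p_pos : (1 <= p)%nat.
Hypothesis p_le : (p <= al * al)%nat.
Hypothesis c_ge1 : 1 <= c.
Hypothesis c_le : c <= INR p * gamma al / INR al.

Local Notation g := (gamma al).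
Local Notation l := (lambda al).
Local Notation D := ((gamma al - lambda al) ^ 2).
Local Notation X r := (c / (gamma al - lambda al) ^ 2 * gamma al ^ (2 * r + 1)).

Lemma ncr_bounds r : X r - 1 < INR (ncr al c r) <= X r.
Proof.
  pose proof (gamma_ge al al_pos) as Hg. pose proof (gamma_minus_lambda_sq al al_pos) as HD.
  pose proof (alpha_ge1 al al_pos) as Ha.
  assert (HX : 0 <= X r).
  { unfold Rdiv. apply Rmult_le_pos; [apply Rmult_le_pos|apply pow_le]; [lra| |lra].
    apply Rlt_le, Rinv_0_lt_compat. nra. }
  unfold ncr. destruct (base_Int_part (X r)) as [H1 H2].
  assert (Hz : (0 <= Int_part (X r))%Z).
  { destruct (Z.le_gt_cases 0 (Int_part (X r))) as [h|h]; [exact h|].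
    exfalso. apply Z.lt_le_pred, IZR_le in h. change (IZR (Z.pred 0)) with (-1) in h. lra. }
  rewrite INR_IZR_INZ, Z2Nat.id by exact Hz. lra.
Qed.

Section Large.
Variable s : nat.
Hypothesis s_large : (4 * al * al + p + 14 <= s)%nat.
Local Notation r := (S (S s)).
Local Notation N := (ncr al c (S (S s))).

Lemma ncr_ge : g ^ r * g ^ r / D <= INR N.
Proof.
  pose proof (gamma_ge al al_pos) as Hg. pose proof (gamma_minus_lambda_sq al al_pos) as HD.
  pose proof (alpha_ge1 al al_pos) as Ha. set (a := INR al) in *.
  pose proof (ncr_bounds r) as HN.
  assert (Hr : 4 * a * a + 16 <= INR r).
  { replace (4 * a * a + 16) with (INR (4 * al * al + 16))
      by (unfold a; rewrite plus_INR, !mult_INR; simpl; ring).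
    apply le_INR. lia. }
  assert (Hb : 1 + INR r * (g - 1) <= g ^ r).
  { replace g with (1 + (g - 1)) at 2 by ring. apply poly. lra. }
  assert (Hgr : D <= g ^ r * (g - 1)).
  { assert ((1 + INR r * (g - 1)) * (g - 1) <= g ^ r * (g - 1))
      by (apply Rmult_le_compat_r; lra).
    assert (0 <= INR r * ((g - 1) * (g - 1) - 1 / 4))
      by (apply Rmult_le_pos; [apply pos_INR | nra]).
    nra. }
  replace (g ^ (2 * r + 1)) with (g ^ r * g ^ r * g) in HN
    by (replace (2 * r + 1)%nat with (r + r + 1)%nat by lia; now rewrite !pow_add, pow_1).
  enough (g ^ r * g ^ r / D + 1 <= c / D * (g ^ r * g ^ r * g)) by lra.
  apply Rmult_le_reg_r with D; [nra|].
  replace ((g ^ r * g ^ r / D + 1) * D) with (g ^ r * g ^ r + D) by (field; nra).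
  replace (c / D * (g ^ r * g ^ r * g) * D) with (c * g * (g ^ r * g ^ r)) by (field; nra).
  pose proof (gamma_pow_ge1 al al_pos r) as Hgr1.
  assert (g ^ r * (g - 1) <= g ^ r * g ^ r * (g - 1)) by nra.
  assert (0 <= g ^ r * g ^ r * (c * g - g)) by (apply Rmult_le_pos; nra).
  nra.
Qed.

Lemma ncr_mul_lt : (al * N < (p * lucas al r + 1) * lucas al (S (S r)))%nat.
Proof.
  pose proof (gamma_ge al al_pos) as Hg. pose proof (gamma_minus_lambda_sq al al_pos) as HD.
  pose proof (alpha_ge1 al al_pos) as Ha. pose proof (ncr_bounds r) as HN.
  pose proof (lucas_mul_SS_ge al al_pos r) as HU.
  set (a := INR al) in *.
  apply INR_lt. rewrite !mult_INR, plus_INR, mult_INR. fold a. change (INR 1) with 1.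
  assert (Hac : a * c <= INR p * g)
    by (apply Rmult_le_reg_r with (/ a); [apply Rinv_0_lt_compat; lra|];
        replace (a * c * / a) with c by (field; lra); exact c_le).
  assert (HaX : a * INR N <= INR p * g ^ (2 * r + 2) / D).
  { replace (INR p * g ^ (2 * r + 2) / D) with (INR p * g * (g ^ (2 * r + 1) / D))
      by (replace (2 * r + 2)%nat with (S (2 * r + 1)) by lia; simpl; field; nra).
    apply Rle_trans with (a * c * (g ^ (2 * r + 1) / D)).
    - replace (a * c * (g ^ (2 * r + 1) / D)) with (a * X r) by (field; nra).
      apply Rmult_le_compat_l; lra.
    - apply Rmult_le_compat_r; [|exact Hac].
      unfold Rdiv. apply Rmult_le_pos; [apply pow_le; lra|apply Rlt_le, Rinv_0_lt_compat; nra]. }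
  assert (HpU : INR p <= INR (lucas al (S (S r))))
    by (apply le_INR; pose proof (lucas_ge_index al al_pos (S r)); lia).
  assert (HpD : INR p * (a ^ 2 + 2) / D < INR p).
  { pose proof (le_INR 1 p p_pos). apply (Rmult_lt_reg_r D); [nra|].
    replace (INR p * (a ^ 2 + 2) / D * D) with (INR p * (a ^ 2 + 2)) by (field; nra).
    rewrite HD. nra. }
  assert (INR p * ((g ^ (2 * r + 2) - (a ^ 2 + 2)) / D)
          <= INR p * (INR (lucas al r) * INR (lucas al (S (S r)))))
    by (apply Rmult_le_compat_l; [apply pos_INR | exact HU]).
  replace (INR p * ((g ^ (2 * r + 2) - (a ^ 2 + 2)) / D))
    with (INR p * g ^ (2 * r + 2) / D - INR p * (a ^ 2 + 2) / D) in H by (field; nra).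
  nra.
Qed.

Lemma lucas_mul_lt_ncr : (lucas al r * lucas al (S r) < N + lucas al (S r))%nat.
Proof.
  pose proof (gamma_ge al al_pos) as Hg. pose proof (gamma_minus_lambda_sq al al_pos) as HD.
  pose proof (alpha_ge1 al al_pos) as Ha. pose proof (ncr_bounds r) as HN.
  pose proof (lucas_mul_S_le al al_pos r) as HU.
  set (a := INR al) in *.
  apply INR_lt. rewrite mult_INR, plus_INR.
  assert (H2 : 2 <= INR (lucas al (S r)))
    by (apply (le_INR 2); pose proof (lucas_ge_index al al_pos r); lia).
  assert (HX : g ^ (2 * r + 1) / D <= X r).
  { assert (0 <= g ^ (2 * r + 1) / D)
      by (unfold Rdiv; apply Rmult_le_pos; [apply pow_le; lra|apply Rlt_le, Rinv_0_lt_compat; nra]).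
    replace (X r) with (c * (g ^ (2 * r + 1) / D)) by (field; nra). nra. }
  assert ((a + 1) / D < 1)
    by (apply (Rmult_lt_reg_r D); [nra|]; unfold Rdiv; rewrite Rmult_assoc, Rinv_l; nra).
  replace ((g ^ (2 * r + 1) + a + 1) / D) with (g ^ (2 * r + 1) / D + (a + 1) / D) in HU
    by (field; nra).
  lra.
Qed.

Lemma tri_value_above i a b : in_triangle al p i a b -> (s < i)%nat ->
  (N < tri_value al i a b)%nat.
Proof.
  intros [Ha Hb] Hi. pose proof ncr_mul_lt.
  assert (lucas al r <= lucas al (S i))%nat by (apply lucas_mono; lia).
  assert (lucas al (S (S r)) <= lucas al (S (S (S i))))%nat by (apply lucas_mono; lia).
  assert (b * lucas al (S (S (S i))) <= al * tri_value al i a b)%nat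
    by (unfold tri_value; rewrite (lucas_SS al (S i)); nia).
  assert ((p * lucas al r + 1) * lucas al (S (S r)) <= b * lucas al (S (S (S i))))%nat
    by (apply Nat.mul_le_mono; nia).
  nia.
Qed.

Lemma tri_value_below i a b : in_triangle al p i a b ->
  (i < s \/ (i = s /\ a < lucas al r))%nat -> (tri_value al i a b <= N)%nat.
Proof.
  intros [Ha Hb] Hi. pose proof lucas_mul_lt_ncr.
  assert (tri_value al i a b <= a * lucas al (S (S (S i))))%nat
    by (unfold tri_value; rewrite (lucas_SS al (S i)); nia).
  assert (Hr2 : (2 <= lucas al r)%nat) by (pose proof (lucas_ge_index al al_pos (S s)); lia).
  destruct Hi as [Hi|[-> Hi]]; [|nia].
  assert (lucas al (S (S i)) <= lucas al (S s))%nat by (apply lucas_mono; lia).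
  assert (lucas al (S (S (S i))) <= lucas al r)%nat by (apply lucas_mono; lia).
  assert (lucas al (S s) <= lucas al r)%nat by (apply lucas_mono; lia).
  assert (lucas al (S s) * lucas al r <= (lucas al r - 1) * lucas al (S r))%nat
    by (rewrite (lucas_SS al (S s)); nia).
  nia.
Qed.

Lemma count_Sp_ncr_approx :
  Rabs (INR (count_Sp al p N) - INR (triangle_count al p (S s))) <= INR al * g ^ r.
Proof.
  assert (HalN : (al <= N)%nat).
  { pose proof lucas_mul_lt_ncr.
    assert (Hr2 : (2 <= lucas al r)%nat) by (pose proof (lucas_ge_index al al_pos (S s)); lia).
    assert (al * lucas al r <= lucas al (S r))%nat by (rewrite (lucas_SS al (S s)); lia).
    nia. }
  pose proof (count_Sp_le al p al_pos N s tri_value_above) as Hup.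
  pose proof (count_Sp_ge al p al_pos N s HalN tri_value_below) as Hlow.
  assert (Hband : (band_count al (p * lucas al (S s)) (lucas al r)
            <= band_count al (p * lucas al (S s)) (lucas al r - 1) + al * lucas al r)%nat).
  { pose proof (lucas_pos al al_pos r ltac:(lia)).
    destruct (lucas al r) as [|B]; [lia|].
    cbn [band_count]. rewrite Nat.sub_succ, Nat.sub_0_r. lia. }
  cbn [triangle_count] in *.
  pose proof (lucas_le_gamma_pow al al_pos r). pose proof (gamma_pow_ge1 al al_pos r).
  pose proof (alpha_ge1 al al_pos).
  assert (Hle : INR (lucas al r) * INR al <= g ^ r * INR al) by (apply Rmult_le_compat_r; lra).
  apply le_INR in Hup. apply le_INR in Hlow. apply le_INR in Hband.
  rewrite !plus_INR, !mult_INR in *.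
  apply Rabs_le. nra.
Qed.

End Large.

Lemma count_Sp_ncr_ratio : exists C r0, forall r, (r0 <= r)%nat ->
  Rabs (INR (count_Sp al p (ncr al c r)) / INR (ncr al c r)
        - / 2 * / c * (1 - / (INR al * g) * INR p) ^ 2) <= C * / g ^ r.
Proof.
  destruct (triangle_count_approx al p al_pos p_le) as [K HK].
  pose proof (gamma_ge al al_pos) as Hg. pose proof (gamma_minus_lambda_sq al al_pos) as HD.
  pose proof (alpha_ge1 al al_pos) as Ha.
  set (q := / (INR al * g) * INR p) in *.
  set (t := / 2 * / c * (1 - q) ^ 2).
  set (Q := / 2 * (1 - q) ^ 2 * g ^ 3 / D).
  assert (Ht : 0 <= t)
    by (apply Rmult_le_pos;
        [apply Rmult_le_pos; apply Rlt_le, Rinv_0_lt_compat | apply pow2_ge_0]; lra).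
  assert (HQ : 0 <= Q).
  { unfold Q, Rdiv. apply Rmult_le_pos; [|apply Rlt_le, Rinv_0_lt_compat; nra].
    apply Rmult_le_pos; [apply Rmult_le_pos; [lra|apply pow2_ge_0]|apply pow_le; lra]. }
  assert (HK0 : 0 <= K)
    by (pose proof (Rle_trans _ _ _ (Rabs_pos _) (HK O)); simpl in *; lra).
  exists ((INR al + K + Q + t) * D), (4 * al * al + p + 16)%nat.
  intros r Hr. destruct r as [|[|s]]; [lia..|].
  assert (Hs : (4 * al * al + p + 14 <= s)%nat) by lia.
  pose proof (count_Sp_ncr_approx s Hs) as Hcount.
  pose proof (HK (S s)) as Htri. pose proof (ncr_bounds (S (S s))) as HN.
  replace (/ 2 * (1 - q) ^ 2 * (g ^ (2 * S s + 3) - g ^ 3) / D)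
    with (t * X (S (S s)) - Q) in Htri
    by (unfold t, Q; replace (2 * S s + 3)%nat with (2 * S (S s) + 1)%nat by lia; field; nra).
  pose proof (gamma_pow_ge1 al al_pos (S (S s))) as Hgr.
  assert (K * g ^ S s <= K * g ^ S (S s))
    by (apply Rmult_le_compat_l; [lra|apply Rle_pow; [lra|lia]]).
  apply Rabs_ratio_sub_le; [nra|lra|nra|apply (ncr_ge s Hs)|].
  apply Rabs_le. apply Rabs_le_inv in Hcount, Htri. nra.
Qed.

End Main.

Lemma one_sub_alpha_div_gamma al : (1 <= al)%nat ->
  1 - / (INR al * gamma al) * INR (al * al) = / gamma al ^ 2.
Proof.
  intros Hal. pose proof (alpha_ge1 al Hal). pose proof (gamma_ge al Hal).
  rewrite mult_INR.
  replace (/ (INR al * gamma al) * (INR al * INR al)) with (INR al / gamma al) by (field; lra).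
  assert (Hl : lambda al = - / gamma al).
  { apply (Rmult_eq_reg_l (gamma al)); [|lra]. rewrite (gamma_mul_lambda al Hal). field. lra. }
  rewrite <- (gamma_plus_lambda al), Hl. field. lra.
Qed.

Theorem corollary1p5 :
  (forall (alpha p : nat) (c : R),
      (1 <= alpha)%nat -> (1 <= p)%nat -> (p <= alpha * alpha)%nat ->
      1 <= c -> c <= INR p * gamma alpha / INR alpha ->
      exists C : R, exists r0 : nat, forall r : nat, (r0 <= r)%nat ->
        Rabs (INR (count_Sp alpha p (ncr alpha c r)) / INR (ncr alpha c r)
              - / 2 * / c * (1 - / (INR alpha * gamma alpha) * INR p) ^ 2)
        <= C * / gamma alpha ^ r)
  /\
  (forall (alpha : nat) (c : R),
      (1 <= alpha)%nat ->
      1 <= c -> c <= INR alpha * gamma alpha ->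
      exists C : R, exists r0 : nat, forall r : nat, (r0 <= r)%nat ->
        Rabs (INR (count_Sp alpha (alpha * alpha) (ncr alpha c r))
                / INR (ncr alpha c r)
              - / 2 * / c * / gamma alpha ^ 4)
        <= C * / gamma alpha ^ r).
Proof.
  split.
  - exact count_Sp_ncr_ratio.
  - intros al c Hal Hc1 Hc2.
    pose proof (alpha_ge1 al Hal). pose proof (gamma_ge al Hal).
    replace (/ gamma al ^ 4) with ((1 - / (INR al * gamma al) * INR (al * al)) ^ 2)
      by (rewrite one_sub_alpha_div_gamma by exact Hal; field; lra).
    apply count_Sp_ncr_ratio; [exact Hal|nia|lia|exact Hc1|].
    rewrite mult_INR. replace (INR al * INR al * gamma al / INR al) with (INR al * gamma al)
      by (field; lra).
    exact Hc2.
Qed.
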